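(* Let $S=\{p_1,\dots,p_m\}$ be a finite set of possibly partial probability distributions, all with the same total mass $\textsc{Mass}(S)>0$. Let $\textsc{OPT}_S$ be a minimum-entropy coupling of $S$. Then $$H(\textsc{OPT}_S)\ \ge\ H(\textsc{Profile}_S)\triangleq\int_0^{\textsc{Mass}(S)}\log_2\!\left(\frac{1}{\textsc{Profile}_S(x)}\right)dx .$$
   Context: A possibly partial distribution $p$ is a finite vector of nonnegative reals $p(1)\ge p(2)\ge\dots\ge p(n)$ (always sorted in non-increasing order) with total mass $\textsc{Mass}(p)=\sum_j p(j)\le 1$. A coupling of $p_1,\dots,p_m$ is a nonnegative array $\mathcal C(i_1,\dots,i_m)$ such that for every $k$ and every state $i_k$, the sum of $\mathcal C$ over all tuples with $k$-th coordinate $i_k$ equals $p_k(i_k)$. Its entropy is $H(\mathcal C)=\sum \mathcal C(i)\log_2(1/\mathcal C(i))$ (with $0\log(1/0)=0$); $\textsc{OPT}_S$ is a coupling of minimum entropy. For a possibly partial distribution $p$, $\textsc{Sketch}_p:(0,\textsc{Mass}(p)]\to\mathbb R$ is defined by $\textsc{Sketch}_p(x)=p(i)$ for $x\in\big(\sum_{j>i}p(j),\sum_{j\ge i}p(j)\big]$. The profile is $\textsc{Profile}_S(x)=\min_{p\in S}\textsc{Sketch}_p(x)$ for $x\in(0,\textsc{Mass}(S)]$. *)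

From HB Require Import structures.
From mathcomp Require Import all_boot all_order all_algebra.
From mathcomp Require Import all_classical all_reals all_analysis.
Set Implicit Arguments. Unset Strict Implicit. Unset Printing Implicit Defensive.
Import Order.TTheory GRing.Theory Num.Theory.
Local Open Scope ring_scope.

Section Defs.
Variable R : realType.

Definition log2 (y : R) : R := ln y / ln 2.

Definition is_ppd (n : nat) (p : 'I_n -> R) : Prop :=
  (forall i, 0 <= p i) /\
  (forall i j : 'I_n, (i <= j)%N -> p j <= p i) /\
  \sum_(i < n) p i <= 1.

Definition Mass (n : nat) (p : 'I_n -> R) : R := \sum_(i < n) p i.

Definition tail_gt (n : nat) (p : 'I_n -> R) (i : 'I_n) : R :=
  \sum_(j < n | (i < j)%N) p j.
Definition tail_ge (n : nat) (p : 'I_n -> R) (i : 'I_n) : R :=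
  \sum_(j < n | (i <= j)%N) p j.

(* Sketch_p(x) = p(i) for x in (sum_{j>i} p(j), sum_{j>=i} p(j)];
   these intervals are pairwise disjoint, so at most one term is nonzero.
   (Outside (0, Mass p] the value is 0, but it is only used on (0, Mass p].) *)
Definition Sketch (n : nat) (p : 'I_n -> R) (x : R) : R :=
  \sum_(i < n) (if (tail_gt p i < x) && (x <= tail_ge p i) then p i else 0).

Definition Profile (m : nat) (n : 'I_m.+1 -> nat)
    (p : forall k : 'I_m.+1, 'I_(n k) -> R) (x : R) : R :=
  \big[Num.min/Sketch (p ord0) x]_(k < m.+1) Sketch (p k) x.

Definition joint (m : nat) (n : 'I_m.+1 -> nat) : finType :=
  {dffun forall k : 'I_m.+1, 'I_(n k)}.

Definition is_coupling (m : nat) (n : 'I_m.+1 -> nat)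
    (p : forall k : 'I_m.+1, 'I_(n k) -> R) (C : joint n -> R) : Prop :=
  (forall t, 0 <= C t) /\
  (forall (k : 'I_m.+1) (i : 'I_(n k)), \sum_(t : joint n | t k == i) C t = p k i).

Definition entropy (m : nat) (n : 'I_m.+1 -> nat) (C : joint n -> R) : R :=
  \sum_(t : joint n) (if C t == 0 then 0 else C t * log2 (1 / C t)).

Definition is_min_entropy_coupling (m : nat) (n : 'I_m.+1 -> nat)
    (p : forall k : 'I_m.+1, 'I_(n k) -> R) (C : joint n -> R) : Prop :=
  is_coupling p C /\
  (forall C' : joint n -> R, is_coupling p C' -> entropy C <= entropy C').

End Defs.

(* Sort the atom masses c_1 <= ... <= c_N of the coupling and cut (0, M] into
   consecutive intervals of lengths c_1, ..., c_N.  On the j-th interval the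
   profile is at least c_j: if at such an x some marginal p_k had Sketch value
   p_k(i) < c_j, then every atom t with t_k >= i would have mass
   C(t) <= p_k(t_k) <= p_k(i) < c_j, so the tail mass of p_k from i, which is
   at least x, would be carried by atoms lighter than c_j, whose total mass is
   at most c_1 + ... + c_(j-1) < x.  Hence log2 (1 / Profile) integrates to at
   most c_j log2 (1 / c_j) over the j-th interval, and these bounds sum to the
   entropy. *)

From HB Require Import structures.
From mathcomp Require Import all_boot all_order all_algebra.
From mathcomp Require Import all_classical all_reals all_analysis.
From mathcomp Require Import measurable_realfun.
Import Order.TTheory GRing.Theory Num.Theory.
Local Open Scope ring_scope.
Local Open Scope classical_set_scope.

Section Log2.
Context {R : realType}.

Lemma log2_inv_ge0 (y : R) : y <= 1 -> 0 <= log2 (1 / y).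
Proof.
move=> y_le1; rewrite /log2 divr_ge0 //; last by rewrite ltW // ln_gt0 // ltr1n.
have [y_le0|y_gt0] := lerP y 0; first by rewrite ln0 // div1r invr_le0.
by rewrite ln_ge0 // div1r invf_ge1.
Qed.

Lemma ler_log2_inv (c y : R) : 0 < c -> c <= y -> log2 (1 / y) <= log2 (1 / c).
Proof.
move=> c_gt0 cy; have y_gt0 := lt_le_trans c_gt0 cy.
rewrite /log2 ler_pM2r ?invr_gt0 ?ln_gt0 ?ltr1n //.
by rewrite ler_ln ?posrE ?div1r ?invr_gt0 // lef_pV2 ?posrE.
Qed.

Lemma measurable_log2_inv (g : R -> R) :
  measurable_fun setT g -> measurable_fun setT (fun x => log2 (1 / g x)).
Proof.
move=> mg.
rewrite (_ : (fun x => _) = ( *%R^~ (- (ln (2 : R))^-1)) \o (@ln R \o g)).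
  apply: measurableT_comp; first exact: mulrr_measurable.
  by apply: measurableT_comp; first exact: measurable_ln.
apply/funext => x /=; rewrite /log2 div1r.
have [g_le0|g_gt0] := lerP (g x) 0.
  by rewrite (ln0 g_le0) ln0 ?invr_le0 // !mul0r.
by rewrite lnV ?posrE // mulrN mulNr.
Qed.

End Log2.

Section StepIntegral.
Context {R : realType}.
Notation mu := (@lebesgue_measure R).

Lemma integral_itv_oc_le (f : R -> R) (a b L : R) :
  measurable_fun setT f -> a <= b -> (forall x, a < x <= b -> 0 <= f x <= L) ->
  (\int[mu]_(x in `]a, b]) (f x)%:E <= (L * (b - a))%:E)%E.
Proof.
move=> mf ab fab.
have mab : measurable (`]a, b] : set R) by exact: measurable_itv.
apply: (@le_trans _ _ (\int[mu]_(x in `]a, b]) (cst L%:E) x)%E).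
  apply: ge0_le_integral => //.
  - by move=> x; rewrite /= in_itv => /fab /andP[]; rewrite lee_fin.
  - by apply/measurable_EFinP; exact: measurable_funS mf.
  - by move=> x; rewrite /= in_itv => /fab /andP[]; rewrite lee_fin.
rewrite integral_cst //.
have := lebesgue_measure_itv `]a, b]%R; rewrite /= lte_fin.
case: ltP => [_ ->|ba ->]; first by rewrite -EFinD -EFinM.
by rewrite (@le_anti _ _ a b) ?ab // subrr mulr0 mule0.
Qed.

Lemma integral_itv_oc_le_steps (f g : R -> R) (cs : seq R) (a : R) :
  measurable_fun setT f ->
  (forall c, c \in cs -> 0 <= c) ->
  (forall x, a < x <= a + \sum_(c <- cs) c -> 0 <= f x) ->
  (forall pre c post, cs = pre ++ c :: post ->
     forall x, a + \sum_(y <- pre) y < x <= a + \sum_(y <- pre) y + c ->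
     f x <= g c) ->
  (\int[mu]_(x in `]a, (a + \sum_(c <- cs) c)%R]) (f x)%:E
     <= (\sum_(c <- cs) c * g c)%:E)%E.
Proof.
move=> mf; elim: cs a => [|c cs IH] a cs_ge0 f_ge0 f_le.
  by rewrite !big_nil addr0 set_itv_ge ?bnd_simp ?ltxx // integral_set0.
have c_ge0 : 0 <= c by apply: cs_ge0; rewrite mem_head.
have cs'_ge0 c' : c' \in cs -> 0 <= c'.
  by move=> c'_in; rewrite cs_ge0 // inE c'_in orbT.
have sum_ge0 : 0 <= \sum_(y <- cs) y by rewrite big_seq sumr_ge0.
rewrite !big_cons addrA in f_ge0 *.
have split_itv : `]a, a + c + \sum_(y <- cs) y] =
    `]a, a + c] `|` `]a + c, a + c + \sum_(y <- cs) y].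
  by rewrite -itv_bndbnd_setU // bnd_simp ?lerDl.
have mitv (u v : R) : measurable (`]u, v] : set R) by exact: measurable_itv.
rewrite split_itv ge0_integral_setU //; last 3 first.
- by apply/measurable_EFinP; exact: measurable_funS mf.
- by move=> x; rewrite -split_itv /= in_itv lee_fin => /f_ge0.
- apply/disj_setPS => x [] /=; rewrite !in_itv /= => /andP[_ xac] /andP[acx _].
  by have := lt_le_trans acx xac; rewrite ltxx.
rewrite EFinD leeD //.
  have -> : c * g c = g c * (a + c - a) by rewrite addrAC subrr add0r mulrC.
  apply: integral_itv_oc_le => //; first by rewrite lerDl.
  move=> x /andP[ax xac].
  rewrite f_ge0 /=; last by rewrite ax (le_trans xac) ?lerDl.
  by apply: (f_le [::] c cs) => //; rewrite big_nil addr0 ax.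
apply: IH => // [x /andP[acx xs]|pre c' post cs_eq x]; first last.
  move=> hx; apply: (f_le (c :: pre) c' post); first by rewrite cs_eq.
  by rewrite big_cons addrA.
by rewrite f_ge0 // xs andbT (le_lt_trans _ acx) // lerDl.
Qed.

End StepIntegral.

Section Sketch.
Context {R : realType} {n : nat} {p : 'I_n -> R}.

Lemma measurable_Sketch : measurable_fun setT (Sketch p).
Proof.
apply: measurable_sum => i.
rewrite (_ : (fun x => _) =
  ( *%R^~ (p i)) \o (\1_(`]tail_gt p i, tail_ge p i]) : R -> R)).
  apply: measurableT_comp; first exact: mulrr_measurable.
  by apply: measurable_indic; exact: measurable_itv.
apply/funext => x /=; rewrite indicE.
case: ifP => x_in; first by rewrite mem_set ?mul1r //= in_itv /= x_in.
by rewrite memNset ?mul0r //= in_itv /= x_in.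
Qed.

Lemma exists_Sketch_cell (x : R) :
  0 < x -> x <= Mass p -> exists i, tail_gt p i < x <= tail_ge p i.
Proof.
case: n p => [|n'] q x_gt0 x_le.
  by move: x_le; rewrite /Mass big_ord0 => /(lt_le_trans x_gt0); rewrite ltxx.
have x_le0 : x <= tail_ge q ord0 by rewrite /tail_ge (eq_bigl xpredT).
have [i x_le_i i_max] := @arg_maxnP _ ord0 (fun i => x <= tail_ge q i)
  (fun i : 'I_n'.+1 => i : nat) x_le0.
(* [tail_gt q i] is [tail_ge q i.+1], so maximality of i gives the strict
   lower bound. *)
exists i; rewrite x_le_i andbT ltNge; apply/negP => x_le_gt.
have [i_lt|i_last] := ltnP i.+1 n'.+1.
  by have := i_max (Ordinal i_lt) x_le_gt; rewrite /= ltnn.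
move: x_le_gt; rewrite /tail_gt big_pred0 => [/(lt_le_trans x_gt0)|j].
  by rewrite ltxx.
by apply/negbTE; rewrite -leqNgt -ltnS (leq_trans (ltn_ord j) i_last).
Qed.

Hypothesis p_ge0 : forall i, 0 <= p i.

Lemma Sketch_ge_cell (i : 'I_n) (x : R) :
  tail_gt p i < x <= tail_ge p i -> p i <= Sketch p x.
Proof.
move=> x_in; rewrite /Sketch (bigD1 i) //= x_in lerDl.
by apply: sumr_ge0 => j _; case: ifP.
Qed.

Lemma Sketch_le_Mass (x : R) : Sketch p x <= Mass p.
Proof. by apply: ler_sum => i _; case: ifP. Qed.

End Sketch.

Lemma measurable_bigmin (R : realType) (I : Type) (r : seq I) (g0 : R -> R)
    (F : I -> R -> R) :
  measurable_fun setT g0 -> (forall i, measurable_fun setT (F i)) ->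
  measurable_fun setT (fun x => \big[Num.min/g0 x]_(i <- r) F i x).
Proof.
move=> mg0 mF; elim: r => [|i r IH].
  by rewrite (_ : (fun x => _) = g0) //; apply/funext => x; rewrite big_nil.
rewrite (_ : (fun x => _) =
  F i \min (fun x => \big[Num.min/g0 x]_(j <- r) F j x)).
  exact: measurable_minr.
by apply/funext => x; rewrite big_cons.
Qed.

Section Profile.
Context {R : realType} {m : nat} {n : 'I_m.+1 -> nat}.
Context {p : forall k : 'I_m.+1, 'I_(n k) -> R}.

Lemma measurable_Profile : measurable_fun setT (Profile p).
Proof. by apply: measurable_bigmin => [|k]; exact: measurable_Sketch. Qed.

Lemma Profile_le1 (x : R) : is_ppd (p ord0) -> Profile p x <= 1.
Proof.
move=> [p_ge0 [_ mass_le1]].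
rewrite /Profile (le_trans (bigmin_le_id _ _ _ _)) //.
exact: le_trans (Sketch_le_Mass p_ge0 x) mass_le1.
Qed.

End Profile.

Lemma sorted_sum_lt_le_prefix (R : realDomainType) (pre post : seq R) (c : R) :
  sorted <=%R (pre ++ c :: post) -> (forall y, y \in pre -> 0 <= y) ->
  \sum_(y <- pre ++ c :: post | y < c) y <= \sum_(y <- pre) y.
Proof.
rewrite sorted_cat_cons => /andP[_ c_path] pre_ge0.
have post_ge : all (fun y => c <= y) post := order_path_min le_trans c_path.
rewrite big_cat /= [X in _ + X]big1_seq ?addr0; last first.
  move=> y /andP[y_lt]; rewrite inE => /predU1P[y_c|/(allP post_ge)].
    by rewrite y_c ltxx in y_lt.
  by rewrite leNgt y_lt.
rewrite [leRHS](bigID (fun y => y < c)) /= lerDl big_seq_cond sumr_ge0 //.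
by move=> y /andP[/pre_ge0].
Qed.

Section SortedMasses.
Context {R : realType} {m : nat} {n : 'I_m.+1 -> nat} (C : joint n -> R).

Definition sorted_masses : seq R := sort <=%R [seq C t | t <- enum (joint n)].

Lemma big_sorted_masses (P : pred R) (F : R -> R) :
  \sum_(c <- sorted_masses | P c) F c = \sum_(t | P (C t)) F (C t).
Proof.
by rewrite (perm_big _ (permEl (perm_sort _ _))) big_map big_enum_cond.
Qed.

Lemma entropy_sorted_masses :
  entropy C = \sum_(c <- sorted_masses) c * log2 (1 / c).
Proof.
rewrite big_sorted_masses; apply: eq_bigr => t _.
by case: eqP => [->|]; rewrite ?mul0r.
Qed.

End SortedMasses.

Section Coupling.
Context {R : realType} {m : nat} {n : 'I_m.+1 -> nat}.
Context {p : forall k : 'I_m.+1, 'I_(n k) -> R} {C : joint n -> R}.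
Hypothesis C_coupling : is_coupling p C.

Let C_ge0 t : 0 <= C t. Proof. by case: C_coupling. Qed.

Let C_marginal k i : \sum_(t : joint n | t k == i) C t = p k i.
Proof. by case: C_coupling. Qed.

Lemma coupling_marginal_ge0 k i : 0 <= p k i.
Proof. by rewrite -C_marginal sumr_ge0. Qed.

Lemma coupling_le_marginal k t : C t <= p k (t k).
Proof. by rewrite -C_marginal (bigD1 t) //= lerDl sumr_ge0. Qed.

Lemma coupling_total k : \sum_(t : joint n) C t = Mass (p k).
Proof.
rewrite (partition_big (fun t : joint n => t k) xpredT) //.
by apply: eq_bigr => i _; rewrite C_marginal.
Qed.

Lemma coupling_tail_ge k i :
  tail_ge (p k) i = \sum_(t : joint n | (i <= t k)%N) C t.
Proof.
rewrite (partition_big (fun t : joint n => t k) (fun j => (i <= j)%N)) //=.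
apply: eq_bigr => j i_le_j; rewrite -C_marginal; apply: eq_bigl => t.
by case: eqP => [->|]; rewrite ?i_le_j ?andbF.
Qed.

Lemma sorted_masses_ge0 c : c \in sorted_masses C -> 0 <= c.
Proof. by rewrite mem_sort => /mapP[t _ ->]. Qed.

Hypothesis p_noninc : forall k (i j : 'I_(n k)), (i <= j)%N -> p k j <= p k i.

Lemma coupling_le_Sketch k (c x : R) :
  0 < x -> x <= Mass (p k) -> \sum_(t | C t < c) C t < x -> c <= Sketch (p k) x.
Proof.
move=> x_gt0 x_le small_lt.
have [i x_in] := exists_Sketch_cell _ x_gt0 x_le.
apply: le_trans (Sketch_ge_cell (coupling_marginal_ge0 k) _ _ x_in).
rewrite leNgt; apply/negP => pi_lt_c.
have light (t : joint n) : (i <= t k)%N -> C t < c.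
  move=> i_le_t; apply: le_lt_trans (coupling_le_marginal k t) _.
  exact: le_lt_trans (p_noninc _ _ _ i_le_t) pi_lt_c.
have tail_small : tail_ge (p k) i <= \sum_(t | C t < c) C t.
  rewrite coupling_tail_ge [leLHS]big_mkcond [leRHS]big_mkcond /=.
  by apply: ler_sum => t _; case: ifP => [/light -> //|_]; case: ifP.
case/andP: x_in => _ x_le_tail.
by have := lt_le_trans small_lt (le_trans x_le_tail tail_small); rewrite ltxx.
Qed.

Lemma coupling_le_Profile (c x : R) :
  0 < x -> (forall k, x <= Mass (p k)) -> \sum_(t | C t < c) C t < x ->
  c <= Profile p x.
Proof.
move=> x_gt0 x_le small_lt; apply: le_bigmin => [|k _]; exact: coupling_le_Sketch.
Qed.

Lemma sorted_masses_le_Profile pre c post (x : R) :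
  sorted_masses C = pre ++ c :: post ->
  \sum_(y <- pre) y < x <= \sum_(y <- pre) y + c -> 0 < c <= Profile p x.
Proof.
move=> masses_eq /andP[pre_lt_x x_le].
have in_masses y : y \in pre ++ c :: post -> 0 <= y.
  by rewrite -masses_eq; exact: sorted_masses_ge0.
have pre_ge0 : 0 <= \sum_(y <- pre) y.
  by rewrite big_seq sumr_ge0 // => y y_pre; rewrite in_masses // mem_cat y_pre.
have post_ge0 : 0 <= \sum_(y <- post) y.
  rewrite big_seq sumr_ge0 // => y y_post.
  by rewrite in_masses // mem_cat inE y_post !orbT.
rewrite -(ltrD2l (\sum_(y <- pre) y)) addr0 (lt_le_trans pre_lt_x) //=.
apply: coupling_le_Profile => [|k|]; first exact: le_lt_trans pre_lt_x.
  rewrite -coupling_total -[X in _ <= X](big_sorted_masses C xpredT id) masses_eq.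
  by rewrite big_cat big_cons /= addrA (le_trans x_le) // lerDl.
rewrite -(big_sorted_masses C (fun y => y < c) id) masses_eq.
rewrite (le_lt_trans _ pre_lt_x) //.
apply: sorted_sum_lt_le_prefix => [|y y_pre].
  by rewrite -masses_eq sort_sorted //; exact: le_total.
by rewrite in_masses // mem_cat y_pre.
Qed.

End Coupling.

Theorem theorem1 (R : realType) (m : nat) (n : 'I_m.+1 -> nat)
    (p : forall k : 'I_m.+1, 'I_(n k) -> R) (M : R) (C : joint n -> R) :
  (forall k, is_ppd (p k)) ->
  (forall k, Mass (p k) = M) ->
  0 < M ->
  is_min_entropy_coupling p C ->
  (\int[lebesgue_measure]_(x in `]0%R, M%R]) (log2 (1 / Profile p x))%:E
     <= (entropy C)%:E)%E.
Proof.
move=> p_ppd p_mass _ [C_coupling _].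
have p_noninc k : forall i j : 'I_(n k), (i <= j)%N -> p k j <= p k i.
  by case: (p_ppd k) => _ [].
have -> : M = 0 + \sum_(c <- sorted_masses C) c.
  by rewrite add0r big_sorted_masses (coupling_total C_coupling ord0) p_mass.
rewrite entropy_sorted_masses.
apply: integral_itv_oc_le_steps => [||x _|pre c post masses_eq x].
- by apply: measurable_log2_inv; exact: measurable_Profile.
- exact: sorted_masses_ge0 C_coupling.
- by apply: log2_inv_ge0; exact: Profile_le1.
rewrite add0r.
move=> /(sorted_masses_le_Profile C_coupling p_noninc _ _ _ _ masses_eq).
by case/andP; exact: ler_log2_inv.
Qed.
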